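(* Assume the exploration assumption in the context and let $\Pi=\{\pi:\min_{s,a}\pi(a\mid s)>0\}$. Then: (1) For any $\pi\in\Pi$, $\bar F(Q,\pi)=[(I-D_\pi)+D_\pi\mathcal H](Q)$ for all $Q\in\mathbb R^{|\mathcal S||\mathcal A|}$, where $D_\pi=\mathrm{diag}(\bar\mu_\pi)$. (2) For any $Q_1,Q_2$ and $\pi\in\Pi$: $\|\bar F(Q_1,\pi)-\bar F(Q_2,\pi)\|_\infty\le\gamma_\pi\|Q_1-Q_2\|_\infty$ and $\|\bar F(Q_1,\pi)\|_\infty\le\|Q_1\|_\infty+1$, where $\gamma_\pi=1-D_{\pi,\min}(1-\gamma)$ and $D_{\pi,\min}=\min_{s,a}\bar\mu_\pi(s,a)>0$. (3) For any $\pi\in\Pi$, the equation $\bar F(Q,\pi)=Q$ has the unique solution $Q=Q^*$. (4) For any $Q_1,Q_2$ with $\|Q_1\|_\infty,\|Q_2\|_\infty\le1/(1-\gamma)$ and $\pi_1,\pi_2\in\Pi$: $\|\bar F(Q_1,\pi_1)-\bar F(Q_2,\pi_2)\|_\infty\le3\|Q_1-Q_2\|_\infty+\frac{2}{1-\gamma}\|\bar\mu_{\pi_1}-\bar\mu_{\pi_2}\|_\infty$.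
   Context: Finite MDP: states $\mathcal S$, actions $\mathcal A$, kernel $p(s'\mid s,a)$, reward $\mathcal R$ with $|\mathcal R(s,a)|\le1$, discount $\gamma\in(0,1)$. $[\mathcal H(Q)](s,a)=\mathcal R(s,a)+\gamma\sum_{s'}p(s'\mid s,a)\max_{a'}Q(s',a')$; $Q^*$ its unique fixed point (optimal Q-function). Exploration assumption: there is a policy $\pi_b$ with $\pi_b(a\mid s)>0$ for all $(s,a)$ whose state chain $P_{\pi_b}(s,s')=\sum_ap(s'\mid s,a)\pi_b(a\mid s)$ is irreducible. For $\pi\in\Pi$, the state chain $P_\pi$ is then irreducible with unique stationary distribution $\mu_\pi$, and $\bar\mu_\pi(s,a)=\mu_\pi(s)\pi(a\mid s)$ is the stationary distribution of the state-action chain $\bar P_\pi((s,a),(s',a'))=p(s'\mid s,a)\pi(a'\mid s')$. For $Q\in\mathbb R^{|\mathcal S||\mathcal A|}$ and $y=(s_0,a_0)\in\mathcal S\times\mathcal A$: $[F(Q,y)](s,a)=\mathbb 1_{\{(s_0,a_0)=(s,a)\}}(\mathcal R(s,a)+\gamma\sum_{s'}p(s'\mid s,a)\max_{a'}Q(s',a')-Q(s,a))+Q(s,a)$, and $\bar F(Q,\pi)=\mathbb E_{Y\sim\bar\mu_\pi}[F(Q,Y)]$. $\|\cdot\|_\infty$ is the max norm. *)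

From HB Require Import structures.
From mathcomp Require Import all_boot all_order all_algebra.
From mathcomp Require Import reals.
Set Implicit Arguments. Unset Strict Implicit. Unset Printing Implicit Defensive.
Import Order.TTheory GRing.Theory Num.Theory.
Local Open Scope ring_scope.

Section MDP.
Variables (R : realType) (S A : finType).

(* maximum / minimum of a function over a finite type (0 on an empty type) *)
Definition fmax (T : finType) (f : T -> R) : R :=
  match enum T with [::] => 0 | x :: _ => \big[Num.max/f x]_(y : T) f y end.
Definition fmin (T : finType) (f : T -> R) : R :=
  match enum T with [::] => 0 | x :: _ => \big[Num.min/f x]_(y : T) f y end.

Definition supnorm (Q : S -> A -> R) : R :=
  \big[Num.max/0]_(sa : S * A) `|Q sa.1 sa.2|.

Definition is_kernel (p : S -> A -> S -> R) : Prop :=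
  (forall s a s', 0 <= p s a s') /\ (forall s a, \sum_(s' : S) p s a s' = 1).

Definition is_policy (pi : S -> A -> R) : Prop :=
  (forall s a, 0 <= pi s a) /\ (forall s, \sum_(a : A) pi s a = 1).

Definition in_Pi (pi : S -> A -> R) : Prop :=
  is_policy pi /\ 0 < fmin (fun sa : S * A => pi sa.1 sa.2).

Definition Pchain (p : S -> A -> S -> R) (pi : S -> A -> R) (s s' : S) : R :=
  \sum_(a : A) p s a s' * pi s a.

Fixpoint nstep (P : S -> S -> R) (n : nat) (s s' : S) : R :=
  match n with
  | 0 => if s == s' then 1 else 0
  | n.+1 => \sum_(u : S) nstep P n s u * P u s'
  end.

Definition irreducible (P : S -> S -> R) : Prop :=
  forall s s', exists n, 0 < nstep P n s s'.

Definition stationary (P : S -> S -> R) (mu : S -> R) : Prop :=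
  (forall s, 0 <= mu s) /\ \sum_(s : S) mu s = 1 /\
  (forall s', \sum_(s : S) mu s * P s s' = mu s').

Definition exploration (p : S -> A -> S -> R) : Prop :=
  exists pib : S -> A -> R, is_policy pib /\ (forall s a, 0 < pib s a) /\
    irreducible (Pchain p pib).

Definition mubar (mu : S -> R) (pi : S -> A -> R) (s : S) (a : A) : R :=
  mu s * pi s a.

Definition bellman (p : S -> A -> S -> R) (r : S -> A -> R) (gamma : R)
  (Q : S -> A -> R) (s : S) (a : A) : R :=
  r s a + gamma * \sum_(s' : S) p s a s' * fmax (fun a' : A => Q s' a').

Definition Fop (p : S -> A -> S -> R) (r : S -> A -> R) (gamma : R)
  (Q : S -> A -> R) (y : S * A) (s : S) (a : A) : R :=
  (if y == (s, a) then 1 else 0) * (bellman p r gamma Q s a - Q s a) + Q s a.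

(* bar F(Q, pi) = E_{Y ~ w}[F(Q, Y)], with w = bar mu_pi *)
Definition Fbar (p : S -> A -> S -> R) (r : S -> A -> R) (gamma : R)
  (Q : S -> A -> R) (w : S -> A -> R) (s : S) (a : A) : R :=
  \sum_(y : S * A) w y.1 y.2 * Fop p r gamma Q y s a.

End MDP.

From HB Require Import structures.
From mathcomp Require Import all_boot all_order all_algebra.
From mathcomp Require Import reals.
From mathcomp Require Import ring lra.
From Stdlib Require Import FunctionalExtensionality.
Import Order.TTheory GRing.Theory Num.Theory.
Local Open Scope ring_scope.

Set Implicit Arguments. Unset Strict Implicit. Unset Printing Implicit Defensive.

(* Averaging F(Q, y) over y ~ w leaves Q unchanged except at y itself, so
   each entry of Fbar(Q, w) is the convex combination
   (1 - w(s,a)) Q(s,a) + w(s,a) H(Q)(s,a).  Since H is a gamma-contraction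
   in the max norm, the contraction and boundedness estimates hold
   entrywise; changing the weights moves Fbar only by |w - w'| times the
   residual H(Q) - Q, which is at most 2/(1-gamma) on the ball of radius
   1/(1-gamma).  For the fixed point every weight must be positive: a policy
   in Pi dominates a positive multiple of the exploring policy, so its state
   chain is irreducible and its stationary distribution charges every
   state. *)

Lemma ler_sum_term (R : numDomainType) (T : finType) (F : T -> R) (j : T) :
  (forall i, 0 <= F i) -> F j <= \sum_i F i.
Proof. by move=> F_ge0; rewrite (bigD1 j) //= lerDl sumr_ge0. Qed.

Lemma ler_norm_convex (R : numDomainType) (w x y : R) : 0 <= w <= 1 ->
  `|(1 - w) * x + w * y| <= (1 - w) * `|x| + w * `|y|.
Proof.
case/andP=> w_ge0 w_le1; apply: le_trans (ler_normD _ _) _.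
by rewrite !normrM (ger0_norm w_ge0) ger0_norm // subr_ge0.
Qed.

Section FiniteExtrema.
Variables (R : realType) (T : finType).
Implicit Types (f g : T -> R) (c : R).

Lemma fmin_le f x : fmin f <= f x.
Proof.
rewrite /fmin; case E: (enum T) => [|y l]; last exact: bigmin_le.
by have := mem_enum T x; rewrite E in_nil.
Qed.

Lemma fmin_le_ub f c : 0 <= c -> (forall x, f x <= c) -> fmin f <= c.
Proof. by rewrite /fmin; case: (enum T) => [|x l] // _ f_le; exact: (bigmin_inf x). Qed.

(* [fmin] is [0] on an empty type, so [0 < fmin g] only serves to make [T]
   nonempty. *)
Lemma fmin_gt0 f g : 0 < fmin g -> (forall x, 0 < f x) -> 0 < fmin f.
Proof.
rewrite /fmin; case: (enum T) => [|x l]; first by rewrite ltxx.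
by move=> _ f_gt0; apply: lt_bigmin.
Qed.

Lemma fmax_le_shift f g c : 0 <= c ->
  (forall x, f x <= g x + c) -> fmax f <= fmax g + c.
Proof.
move=> c_ge0 fg; rewrite /fmax; case: (enum T) => [|x l]; first by rewrite add0r.
by apply: bigmax_le => [|y _]; apply: le_trans (fg _) _; rewrite lerD2r le_bigmax.
Qed.

Lemma norm_fmax_le f c : 0 <= c -> (forall x, `|f x| <= c) -> `|fmax f| <= c.
Proof.
move=> c_ge0 f_le; rewrite /fmax; case: (enum T) => [|x l]; first by rewrite normr0.
have f_bnd y : - c <= f y <= c by rewrite -ler_norml.
rewrite ler_norml; apply/andP; split.
  by apply: le_trans (bigmax_ge_id _ _ _ _); case/andP: (f_bnd x).
by apply: bigmax_le => [|y _]; [case/andP: (f_bnd x) | case/andP: (f_bnd y)].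
Qed.

Lemma norm_fmaxB_le f g c : 0 <= c ->
  (forall x, `|f x - g x| <= c) -> `|fmax f - fmax g| <= c.
Proof.
move=> c_ge0 fg; have fgE x : - c <= f x - g x <= c by rewrite -ler_norml.
have le_fg : fmax f <= fmax g + c.
  by apply: fmax_le_shift => // x; have /andP[_] := fgE x; lra.
have le_gf : fmax g <= fmax f + c.
  by apply: fmax_le_shift => // x; have /andP[] := fgE x; lra.
rewrite ler_norml; apply/andP; split; lra.
Qed.

End FiniteExtrema.

Section SupNorm.
Variables (R : realType) (S A : finType).
Implicit Types (Q : S -> A -> R).

Lemma normr_le_supnorm Q s a : `|Q s a| <= supnorm Q.
Proof. exact: (le_bigmax _ _ (s, a)). Qed.

Lemma supnorm_ge0 Q : 0 <= supnorm Q.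
Proof. exact: bigmax_ge_id. Qed.

Lemma supnorm_le Q c : 0 <= c -> (forall s a, `|Q s a| <= c) -> supnorm Q <= c.
Proof. by move=> c_ge0 Q_le; apply: bigmax_le => // -[s a] _; exact: Q_le. Qed.

End SupNorm.

Section Bellman.
Variables (R : realType) (S A : finType).
Variables (p : S -> A -> S -> R) (r : S -> A -> R) (gamma : R).
Hypotheses (hp : is_kernel p) (hr : forall s a, `|r s a| <= 1).
Hypotheses (hg0 : 0 <= gamma) (hg1 : gamma < 1).

Let one_minus_gamma_ge0 : 0 <= 1 - gamma.
Proof. by rewrite subr_ge0 ltW. Qed.

Implicit Types (Q : S -> A -> R).

Local Notation H := (bellman p r gamma).

Lemma norm_kernel_avg_le (f : S -> R) c s a : 0 <= c ->
  (forall s', `|f s'| <= c) -> `|\sum_s' p s a s' * f s'| <= c.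
Proof.
case: hp => p_ge0 p_sum1 c_ge0 f_le; apply: le_trans (ler_norm_sum _ _ _) _.
apply: le_trans (_ : \sum_s' p s a s' * c <= _); last by rewrite -mulr_suml p_sum1 mul1r.
by apply: ler_sum => s' _; rewrite normrM ger0_norm // ler_wpM2l.
Qed.

Lemma bellman_lip Q1 Q2 s a :
  `|H Q1 s a - H Q2 s a| <= gamma * supnorm (fun s a => Q1 s a - Q2 s a).
Proof.
have -> : H Q1 s a - H Q2 s a = gamma *
    \sum_s' p s a s' * (fmax (fun a' => Q1 s' a') - fmax (fun a' => Q2 s' a')).
  rewrite /bellman (eq_bigr _ (fun s' _ => mulrBr _ _ _)) sumrB; ring.
rewrite normrM ger0_norm // ler_wpM2l //.
apply: norm_kernel_avg_le (supnorm_ge0 _) _ => s'.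
apply: norm_fmaxB_le (supnorm_ge0 _) _ => a'.
exact: (normr_le_supnorm (fun s a => Q1 s a - Q2 s a)).
Qed.

Lemma bellman_bound Q s a : `|H Q s a| <= 1 + gamma * supnorm Q.
Proof.
apply: le_trans (ler_normD _ _) _; rewrite lerD // normrM ger0_norm //.
rewrite ler_wpM2l // norm_kernel_avg_le ?supnorm_ge0 // => s'.
by rewrite norm_fmax_le ?supnorm_ge0 // => a'; exact: normr_le_supnorm.
Qed.

Lemma bellman_residual_bound Q s a : supnorm Q <= 1 / (1 - gamma) ->
  `|H Q s a - Q s a| <= 2 / (1 - gamma).
Proof.
move=> Q_le; apply: le_trans (ler_normB _ _) _.
have := bellman_bound Q s a; have := normr_le_supnorm Q s a.
have -> : 2 / (1 - gamma) = 1 + (1 + gamma) * (1 / (1 - gamma)).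
  by field; rewrite subr_eq0 gt_eqF.
have : (1 + gamma) * supnorm Q <= (1 + gamma) * (1 / (1 - gamma)).
  by apply: ler_wpM2l; rewrite ?addr_ge0.
lra.
Qed.

Lemma bellman_fixpoint_unique Q1 Q2 : H Q1 = Q1 -> H Q2 = Q2 -> Q1 = Q2.
Proof.
move=> fix1 fix2; set N := supnorm (fun s a => Q1 s a - Q2 s a).
have N_ge0 : 0 <= N := supnorm_ge0 _.
have N_le : N <= gamma * N.
  apply: supnorm_le => [|s a]; first exact: mulr_ge0.
  by have := bellman_lip Q1 Q2 s a; rewrite fix1 fix2.
have N_le0 : N <= 0.
  have : (1 - gamma) * N <= 0 by lra.
  by rewrite pmulr_rle0 // subr_gt0.
apply: functional_extensionality => s; apply: functional_extensionality => a.
apply/eqP; rewrite -subr_eq0 -normr_le0.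
exact: le_trans (normr_le_supnorm (fun s a => Q1 s a - Q2 s a) s a) N_le0.
Qed.

Section Weighted.
Variable w : S -> A -> R.
Hypotheses (w_ge0 : forall s a, 0 <= w s a)
           (w_sum1 : \sum_(y : S * A) w y.1 y.2 = 1).

Lemma weight_le1 s a : w s a <= 1.
Proof.
by rewrite -w_sum1 (ler_sum_term (F := fun y : S * A => w y.1 y.2) (s, a)) // => -[].
Qed.

Lemma weight_itv s a : 0 <= w s a <= 1.
Proof. by rewrite w_ge0 weight_le1. Qed.

Lemma Fbar_mix Q s a : Fbar p r gamma Q w s a = (1 - w s a) * Q s a + w s a * H Q s a.
Proof.
rewrite /Fbar /Fop (bigD1 (s, a)) //= eqxx mul1r.
rewrite (eq_bigr (fun y : S * A => w y.1 y.2 * Q s a)); last first.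
  by move=> y /negbTE ->; rewrite mul0r add0r.
move: w_sum1; rewrite -mulr_suml (bigD1 (s, a)) //= => sum1.
have -> : \sum_(y | y != (s, a)) w y.1 y.2 = 1 - w s a by rewrite -sum1; ring.
ring.
Qed.

Lemma Fbar_contract_at Q1 Q2 s a :
  `|Fbar p r gamma Q1 w s a - Fbar p r gamma Q2 w s a|
    <= (1 - w s a * (1 - gamma)) * supnorm (fun s a => Q1 s a - Q2 s a).
Proof.
set N := supnorm (fun s a => Q1 s a - Q2 s a).
have /andP[w_ge0' w_le1] := weight_itv s a.
rewrite !Fbar_mix.
have -> : (1 - w s a) * Q1 s a + w s a * H Q1 s a
          - ((1 - w s a) * Q2 s a + w s a * H Q2 s a)
    = (1 - w s a) * (Q1 s a - Q2 s a) + w s a * (H Q1 s a - H Q2 s a) by ring.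
apply: le_trans (ler_norm_convex _ _ (weight_itv s a)) _.
have e1 : (1 - w s a) * `|Q1 s a - Q2 s a| <= (1 - w s a) * N.
  by rewrite ler_wpM2l ?subr_ge0 // (normr_le_supnorm (fun s a => Q1 s a - Q2 s a)).
have e2 : w s a * `|H Q1 s a - H Q2 s a| <= w s a * (gamma * N).
  by rewrite ler_wpM2l // bellman_lip.
lra.
Qed.

Lemma Fbar_contract Q1 Q2 (c : R) : 0 <= c <= 1 -> (forall s a, c <= w s a) ->
  supnorm (fun s a => Fbar p r gamma Q1 w s a - Fbar p r gamma Q2 w s a)
    <= (1 - c * (1 - gamma)) * supnorm (fun s a => Q1 s a - Q2 s a).
Proof.
case/andP=> c_ge0 c_le1 c_le; have N_ge0 := supnorm_ge0 (fun s a => Q1 s a - Q2 s a).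
have cg_le1 : c * (1 - gamma) <= 1 by rewrite mulr_ile1 // gerBl.
apply: supnorm_le => [|s a]; first by rewrite mulr_ge0 // subr_ge0.
apply: le_trans (Fbar_contract_at Q1 Q2 s a) _.
by rewrite ler_wpM2r // lerB // ler_wpM2r.
Qed.

Lemma Fbar_bound Q : supnorm (Fbar p r gamma Q w) <= supnorm Q + 1.
Proof.
set N := supnorm Q; have N_ge0 : 0 <= N := supnorm_ge0 _.
apply: supnorm_le => [|s a]; first lra.
rewrite Fbar_mix; apply: le_trans (ler_norm_convex _ _ (weight_itv s a)) _.
have /andP[w_ge0' w_le1] := weight_itv s a.
have e1 : (1 - w s a) * `|Q s a| <= (1 - w s a) * N.
  by rewrite ler_wpM2l ?subr_ge0 // normr_le_supnorm.
have e2 : w s a * `|H Q s a| <= w s a * (1 + gamma * N).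
  by rewrite ler_wpM2l // bellman_bound.
have e3 : 0 <= w s a * ((1 - gamma) * N) by rewrite !mulr_ge0.
lra.
Qed.

Lemma Fbar_fixed_iff (w_gt0 : forall s a, 0 < w s a) Q :
  Fbar p r gamma Q w = Q <-> H Q = Q.
Proof.
split=> [fixF | fixH]; apply: functional_extensionality => s;
  apply: functional_extensionality => a; last by rewrite Fbar_mix fixH; ring.
have := congr1 (fun f => f s a) fixF; rewrite /= Fbar_mix => Fq.
have /eqP : w s a * (H Q s a - Q s a) = 0.
  by apply: (addrI (Q s a)); rewrite addr0 -[RHS]Fq; ring.
by rewrite mulf_eq0 gt_eqF //= subr_eq0 => /eqP.
Qed.

End Weighted.

Lemma Fbar_weight_lip (w w' : S -> A -> R) Q1 Q2 :
  (forall s a, 0 <= w s a) -> \sum_(y : S * A) w y.1 y.2 = 1 ->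
  \sum_(y : S * A) w' y.1 y.2 = 1 -> supnorm Q2 <= 1 / (1 - gamma) ->
  supnorm (fun s a => Fbar p r gamma Q1 w s a - Fbar p r gamma Q2 w' s a)
    <= supnorm (fun s a => Q1 s a - Q2 s a)
       + 2 / (1 - gamma) * supnorm (fun s a => w s a - w' s a).
Proof.
move=> w_ge0 w_sum1 w'_sum1 Q2_le.
have N_ge0 := supnorm_ge0 (fun s a => Q1 s a - Q2 s a).
have K_ge0 : 0 <= 2 / (1 - gamma) by rewrite divr_ge0 ?ler0n.
apply: supnorm_le => [|s a]; first by rewrite addr_ge0 // mulr_ge0 // supnorm_ge0.
have -> : Fbar p r gamma Q1 w s a - Fbar p r gamma Q2 w' s a
    = (Fbar p r gamma Q1 w s a - Fbar p r gamma Q2 w s a)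
      + (w s a - w' s a) * (H Q2 s a - Q2 s a) by rewrite !Fbar_mix //; ring.
apply: le_trans (ler_normD _ _) _; apply: lerD.
  apply: le_trans (Fbar_contract_at w_ge0 w_sum1 Q1 Q2 s a) _.
  by rewrite ler_piMl // gerBl mulr_ge0.
rewrite normrM mulrC ler_pM ?normr_ge0 ?bellman_residual_bound //.
exact: (normr_le_supnorm (fun s a => w s a - w' s a)).
Qed.

End Bellman.

Section MarkovChain.
Variables (R : realType) (S : finType).
Implicit Types (P Q : S -> S -> R) (mu : S -> R).

Lemma nstep_ge0 P : (forall s s', 0 <= P s s') -> forall n s s', 0 <= nstep P n s s'.
Proof.
move=> P_ge0; elim=> [|n IH] s s' /=; first by case: eqP.
by apply: sumr_ge0 => u _; rewrite mulr_ge0.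
Qed.

Lemma stationary_nstep P mu : stationary P mu ->
  forall n s', \sum_s mu s * nstep P n s s' = mu s'.
Proof.
case=> _ [_ muP]; elim=> [|n IH] s' /=.
  rewrite (bigD1 s') //= eqxx mulr1 big1 ?addr0 // => s /negbTE ->.
  by rewrite mulr0.
rewrite -[RHS]muP; under eq_bigr do rewrite mulr_sumr.
rewrite exchange_big /=; apply: eq_bigr => u _.
by rewrite -IH mulr_suml; apply: eq_bigr => s _; rewrite mulrA.
Qed.

Lemma nstep_ge_scale P Q c : 0 <= c -> (forall s s', 0 <= Q s s') ->
  (forall s s', c * Q s s' <= P s s') ->
  forall n s s', c ^+ n * nstep Q n s s' <= nstep P n s s'.
Proof.
move=> c_ge0 Q_ge0 QP; elim=> [|n IH] s s' /=; first by rewrite expr0 mul1r.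
rewrite mulr_sumr; apply: ler_sum => u _.
have -> : c ^+ n.+1 * (nstep Q n s u * Q u s')
          = (c ^+ n * nstep Q n s u) * (c * Q u s') by rewrite exprS; ring.
by rewrite ler_pM ?mulr_ge0 ?exprn_ge0 ?nstep_ge0.
Qed.

Lemma irreducible_ge P Q c : 0 < c -> (forall s s', 0 <= Q s s') ->
  (forall s s', c * Q s s' <= P s s') -> irreducible Q -> irreducible P.
Proof.
move=> c_gt0 Q_ge0 QP irrQ s s'; have [n Qn] := irrQ s s'; exists n.
apply: lt_le_trans (nstep_ge_scale (ltW c_gt0) Q_ge0 QP n s s').
by rewrite mulr_gt0 // exprn_gt0.
Qed.

(* Some state carries positive mass, and every state is reachable from it. *)
Lemma stationary_gt0 P mu : (forall s s', 0 <= P s s') ->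
  irreducible P -> stationary P mu -> forall s, 0 < mu s.
Proof.
move=> P_ge0 irrP mu_stat s'; have [mu_ge0 [mu_sum1 _]] := mu_stat.
have [s0 /= mu_s0] : exists s0, true && (0 < mu s0).
  apply: psumr_neq0P => [s _|]; first exact: mu_ge0.
  by rewrite mu_sum1; apply/eqP; exact: oner_neq0.
have [n Pn] := irrP s0 s'.
rewrite -(stationary_nstep mu_stat n s').
apply: lt_le_trans (ler_sum_term (F := fun s => mu s * nstep P n s s') s0 _).
  exact: mulr_gt0.
by move=> s; rewrite mulr_ge0 ?nstep_ge0.
Qed.

End MarkovChain.

Section StationaryPolicy.
Variables (R : realType) (S A : finType) (p : S -> A -> S -> R).
Hypothesis hp : is_kernel p.
Implicit Types (pi : S -> A -> R) (mu : S -> R).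

Lemma policy_le1 pi s a : is_policy pi -> pi s a <= 1.
Proof. by case=> pi_ge0 pi_sum1; rewrite -(pi_sum1 s) ler_sum_term. Qed.

Lemma Pchain_ge0 pi : is_policy pi -> forall s s', 0 <= Pchain p pi s s'.
Proof. by case=> pi_ge0 _ s s'; apply: sumr_ge0 => a _; rewrite mulr_ge0 // hp.1. Qed.

Lemma Pchain_ge_scale pi pi' (c : R) : is_policy pi' -> 0 <= c ->
  (forall s a, c <= pi s a) -> forall s s', c * Pchain p pi' s s' <= Pchain p pi s s'.
Proof.
move=> pi'_pol c_ge0 c_le s s'; rewrite /Pchain mulr_sumr; apply: ler_sum => a _.
rewrite mulrCA ler_wpM2l ?hp.1 //; apply: le_trans (c_le s a).
by rewrite ler_piMr // policy_le1.
Qed.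

Lemma Pchain_irreducible pi : exploration p -> in_Pi pi -> irreducible (Pchain p pi).
Proof.
case=> pib [pib_pol [_ irr_b]] [_ pi_min].
have pi_ge s a : fmin (fun sa : S * A => pi sa.1 sa.2) <= pi s a := fmin_le _ (s, a).
exact: irreducible_ge pi_min (Pchain_ge0 pib_pol)
  (Pchain_ge_scale pib_pol (ltW pi_min) pi_ge) irr_b.
Qed.

Lemma mubar_ge0 pi mu : is_policy pi -> stationary (Pchain p pi) mu ->
  forall s a, 0 <= mubar mu pi s a.
Proof. by case=> pi_ge0 _ [mu_ge0 _] s a; rewrite mulr_ge0. Qed.

Lemma sum_mubar pi mu : is_policy pi -> stationary (Pchain p pi) mu ->
  \sum_(y : S * A) mubar mu pi y.1 y.2 = 1.
Proof.
case=> _ pi_sum1 [_ [mu_sum1 _]].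
rewrite -(pair_bigA _ (fun s a => mubar mu pi s a)) /= -[RHS]mu_sum1.
by apply: eq_bigr => s _; rewrite /mubar -mulr_sumr pi_sum1 mulr1.
Qed.

Lemma mubar_gt0 pi mu : exploration p -> in_Pi pi -> stationary (Pchain p pi) mu ->
  forall s a, 0 < mubar mu pi s a.
Proof.
move=> hexpl hPi mu_stat s a; rewrite mulr_gt0 //.
  apply: stationary_gt0 mu_stat s; first exact: Pchain_ge0 hPi.1.
  exact: Pchain_irreducible.
exact: lt_le_trans hPi.2 (fmin_le _ (s, a)).
Qed.

End StationaryPolicy.

Theorem lemma2 (R : realType) (S A : finType)
  (p : S -> A -> S -> R) (r : S -> A -> R) (gamma : R)
  (hp : is_kernel p) (hr : forall s a, `|r s a| <= 1)
  (hg0 : 0 < gamma) (hg1 : gamma < 1)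
  (hexpl : exploration p) :
  (* (1) *)
  (forall (pi : S -> A -> R) (mu : S -> R),
     in_Pi pi -> stationary (Pchain p pi) mu ->
     forall Q : S -> A -> R,
       Fbar p r gamma Q (mubar mu pi) =
       (fun s a => (Q s a - mubar mu pi s a * Q s a)
                   + mubar mu pi s a * bellman p r gamma Q s a)) /\
  (* (2) *)
  (forall (pi : S -> A -> R) (mu : S -> R),
     in_Pi pi -> stationary (Pchain p pi) mu ->
     let Dmin := fmin (fun sa : S * A => mubar mu pi sa.1 sa.2) in
     0 < Dmin /\
     forall Q1 Q2 : S -> A -> R,
       supnorm (fun s a => Fbar p r gamma Q1 (mubar mu pi) s a
                           - Fbar p r gamma Q2 (mubar mu pi) s a)
         <= (1 - Dmin * (1 - gamma)) * supnorm (fun s a => Q1 s a - Q2 s a) /\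
       supnorm (Fbar p r gamma Q1 (mubar mu pi)) <= supnorm Q1 + 1) /\
  (* (3) *)
  (forall Qstar : S -> A -> R, bellman p r gamma Qstar = Qstar ->
   forall (pi : S -> A -> R) (mu : S -> R),
     in_Pi pi -> stationary (Pchain p pi) mu ->
     forall Q : S -> A -> R, Fbar p r gamma Q (mubar mu pi) = Q <-> Q = Qstar) /\
  (* (4) *)
  (forall (Q1 Q2 : S -> A -> R) (pi1 pi2 : S -> A -> R) (mu1 mu2 : S -> R),
     supnorm Q1 <= 1 / (1 - gamma) -> supnorm Q2 <= 1 / (1 - gamma) ->
     in_Pi pi1 -> stationary (Pchain p pi1) mu1 ->
     in_Pi pi2 -> stationary (Pchain p pi2) mu2 ->
     supnorm (fun s a => Fbar p r gamma Q1 (mubar mu1 pi1) s a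
                         - Fbar p r gamma Q2 (mubar mu2 pi2) s a)
       <= 3 * supnorm (fun s a => Q1 s a - Q2 s a)
          + 2 / (1 - gamma)
            * supnorm (fun s a => mubar mu1 pi1 s a - mubar mu2 pi2 s a)).
Proof.
have gamma_ge0 := ltW hg0.
split; [|split; [|split]].
- move=> pi mu [hpi _] mu_stat Q.
  apply: functional_extensionality => s; apply: functional_extensionality => a.
  by rewrite (Fbar_mix _ _ _ (sum_mubar hpi mu_stat)); ring.
- move=> pi mu hPi mu_stat Dmin; have hpi := hPi.1.
  have w_ge0 := mubar_ge0 hpi mu_stat; have w_sum1 := sum_mubar hpi mu_stat.
  have Dmin_gt0 : 0 < Dmin.
    by apply: (fmin_gt0 hPi.2) => -[s a]; exact: (mubar_gt0 hp hexpl hPi mu_stat).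
  have Dmin_le1 : Dmin <= 1.
    by apply: fmin_le_ub => // -[s a]; exact: weight_le1 w_ge0 w_sum1 s a.
  split=> // Q1 Q2; split; last exact: Fbar_bound.
  apply: Fbar_contract => //; first by rewrite ltW.
  by move=> s a; exact: (fmin_le _ (s, a)).
- move=> Qs fixQs pi mu hPi mu_stat Q.
  have w_gt0 := mubar_gt0 hp hexpl hPi mu_stat.
  rewrite (Fbar_fixed_iff p r gamma (sum_mubar hPi.1 mu_stat) w_gt0).
  by split=> [fixQ | ->] //; exact: (bellman_fixpoint_unique hp gamma_ge0 hg1 fixQ fixQs).
- move=> Q1 Q2 pi1 pi2 mu1 mu2 _ Q2_le hPi1 mu1_stat hPi2 mu2_stat.
  have w1_ge0 := mubar_ge0 hPi1.1 mu1_stat.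
  apply: le_trans (Fbar_weight_lip hp hr gamma_ge0 hg1 Q1 w1_ge0
    (sum_mubar hPi1.1 mu1_stat) (sum_mubar hPi2.1 mu2_stat) Q2_le) _.
  by rewrite lerD2r ler_peMl ?supnorm_ge0 ?ler1n.
Qed.
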